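(* For every $i\in\{1,\dots,n-1\}$ one has in $SB_n^+$ $$\sigma_i\Delta\doteq\Delta\,\sigma_{n-i},\qquad x_i\Delta\doteq \Delta\, x_{n-i},$$ i.e. $\sigma_i\Delta\doteq\Delta\mathcal R(\sigma_i)$ and $x_i\Delta\doteq\Delta\mathcal R(x_i)$.
   Context: Fix $n\ge 2$. The positive singular braid monoid $SB_n^+$ is the monoid with generators $\sigma_1,\dots,\sigma_{n-1},x_1,\dots,x_{n-1}$ and relations: $\sigma_i\sigma_j=\sigma_j\sigma_i$ and $x_ix_j=x_jx_i$ if $|i-j|>1$; $x_i\sigma_j=\sigma_jx_i$ if $|i-j|\ne 1$; $\sigma_i\sigma_{i+1}\sigma_i=\sigma_{i+1}\sigma_i\sigma_{i+1}$; $\sigma_i\sigma_{i+1}x_i=x_{i+1}\sigma_i\sigma_{i+1}$; $\sigma_{i+1}\sigma_ix_{i+1}=x_i\sigma_{i+1}\sigma_i$. For positive words (words in $\sigma_i,x_i$), $A\doteq B$ means they represent the same element of $SB_n^+$. Garside's fundamental word is $\Delta\equiv\Pi_{n-1}\Pi_{n-2}\cdots\Pi_1$ where $\Pi_t\equiv\sigma_1\sigma_2\cdots\sigma_t$, i.e. $\Delta\equiv\sigma_1\cdots\sigma_{n-1}\sigma_1\cdots\sigma_{n-2}\cdots\sigma_1\sigma_2\sigma_1$. $\mathcal R$ is the letter substitution $\sigma_i\mapsto\sigma_{n-i}$, $x_i\mapsto x_{n-i}$. *)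

From Stdlib Require Import List Arith.
Import ListNotations.

(* Positive singular braid monoid SB_n^+ presented by generators and relations.
   Letters: Sig i = sigma_i, X i = x_i (valid for 1 <= i <= n-1). *)
Inductive letter : Type :=
| Sig : nat -> letter
| X : nat -> letter.

Definition word := list letter.

Definition gen_ok (n i : nat) : Prop := 1 <= i /\ i <= n - 1.

Inductive sb_rel (n : nat) : word -> word -> Prop :=
| r_ss : forall i j, gen_ok n i -> gen_ok n j -> i - j > 1 \/ j - i > 1 ->
    sb_rel n [Sig i; Sig j] [Sig j; Sig i]
| r_xx : forall i j, gen_ok n i -> gen_ok n j -> i - j > 1 \/ j - i > 1 ->
    sb_rel n [X i; X j] [X j; X i]
| r_xs : forall i j, gen_ok n i -> gen_ok n j -> i - j <> 1 -> j - i <> 1 ->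
    sb_rel n [X i; Sig j] [Sig j; X i]
| r_sss : forall i, gen_ok n i -> gen_ok n (S i) ->
    sb_rel n [Sig i; Sig (S i); Sig i] [Sig (S i); Sig i; Sig (S i)]
| r_ssx : forall i, gen_ok n i -> gen_ok n (S i) ->
    sb_rel n [Sig i; Sig (S i); X i] [X (S i); Sig i; Sig (S i)]
| r_ssx' : forall i, gen_ok n i -> gen_ok n (S i) ->
    sb_rel n [Sig (S i); Sig i; X (S i)] [X i; Sig (S i); Sig i].

Inductive sb_eq (n : nat) : word -> word -> Prop :=
| sb_refl : forall w, sb_eq n w w
| sb_sym : forall u v, sb_eq n u v -> sb_eq n v u
| sb_trans : forall u v w, sb_eq n u v -> sb_eq n v w -> sb_eq n u w
| sb_step : forall p q l r, sb_rel n l r -> sb_eq n (p ++ l ++ q) (p ++ r ++ q).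

Definition Pi (t : nat) : word := map (fun k => Sig (S k)) (seq 0 t).

Fixpoint Delta_aux (t : nat) : word :=
  match t with
  | 0 => []
  | S t' => Pi (S t') ++ Delta_aux t'
  end.

Definition Delta (n : nat) : word := Delta_aux (n - 1).

Definition Rlet (n : nat) (a : letter) : letter :=
  match a with
  | Sig i => Sig (n - i)
  | X i => X (n - i)
  end.

(* Write g for either family, sigma or x. Every defining relation is mapped to a
   relation by reversing words, so word reversal is an anti-automorphism of SB_n^+.
   Commuting past sigma_1 ... sigma_(i-1) and applying one braid (or mixed) relation
   gives g_(i+1) Pi_t = Pi_t g_i for i < t, and reversal turns this into
   g_i rev(Pi_t) = rev(Pi_t) g_(i+1).  Writing Delta_t = Pi_t ... Pi_1, we have both
   Delta_(t+1) = Pi_(t+1) Delta_t and Delta_(t+1) = Delta_t rev(Pi_(t+1)), so by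
   induction on t, g_i Delta_t = Delta_t g_(t+1-i): for i = t+1 push g through
   Pi_(t+1) first, otherwise through Delta_t first and then rev(Pi_(t+1)). *)

From Stdlib Require Import List Arith Lia Setoid Morphisms.
Import ListNotations.

Set Implicit Arguments.
Unset Strict Implicit.

Lemma sb_eq_in_context n p q u v : sb_eq n u v -> sb_eq n (p ++ u ++ q) (p ++ v ++ q).
Proof.
  induction 1 as [w | u v _ IH | u v w _ IHuv _ IHvw | p' q' l r Hlr].
  - apply sb_refl.
  - now apply sb_sym.
  - now apply sb_trans with (p ++ v ++ q).
  - replace (p ++ (p' ++ l ++ q') ++ q) with ((p ++ p') ++ l ++ (q' ++ q))
      by now rewrite !app_assoc.
    replace (p ++ (p' ++ r ++ q') ++ q) with ((p ++ p') ++ r ++ (q' ++ q))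
      by now rewrite !app_assoc.
    now apply sb_step.
Qed.

#[local] Instance sb_eq_Equivalence n : Equivalence (sb_eq n).
Proof. split; [exact (sb_refl n) | exact (sb_sym n) | exact (sb_trans n)]. Qed.

#[local] Instance app_sb_eq_Proper n : Proper (sb_eq n ==> sb_eq n ==> sb_eq n) (@app letter).
Proof.
  intros u u' Hu v v' Hv. transitivity (u' ++ v).
  - exact (sb_eq_in_context [] v Hu).
  - pose proof (sb_eq_in_context u' [] Hv) as H. now rewrite !app_nil_r in H.
Qed.

Lemma sb_eq_of_rel n l r : sb_rel n l r -> sb_eq n l r.
Proof.
  intros H. pose proof (sb_step n [] [] l r H) as H'. now rewrite !app_nil_r in H'.
Qed.

Lemma sb_eq_commute_word n a w :
  (forall b, In b w -> sb_eq n [a; b] [b; a]) -> sb_eq n ([a] ++ w) (w ++ [a]).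
Proof.
  induction w as [|b w IH]; intros Hw; [reflexivity|].
  change ([a] ++ b :: w) with ([a; b] ++ w).
  rewrite (Hw b (in_eq b w)).
  change (sb_eq n ([b] ++ ([a] ++ w)) ([b] ++ (w ++ [a]))).
  rewrite IH; [reflexivity|].
  intros c Hc. exact (Hw c (in_cons b c w Hc)).
Qed.

Lemma sb_rel_rev n l r : sb_rel n l r -> sb_eq n (rev l) (rev r).
Proof.
  destruct 1; simpl.
  - apply sb_eq_of_rel, r_ss; tauto.
  - apply sb_eq_of_rel, r_xx; tauto.
  - symmetry. now apply sb_eq_of_rel, r_xs.
  - now apply sb_eq_of_rel, r_sss.
  - symmetry. now apply sb_eq_of_rel, r_ssx'.
  - symmetry. now apply sb_eq_of_rel, r_ssx.
Qed.

Lemma sb_eq_rev n u v : sb_eq n u v -> sb_eq n (rev u) (rev v).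
Proof.
  induction 1 as [w | u v _ IH | u v w _ IHuv _ IHvw | p q l r Hlr].
  - reflexivity.
  - now symmetry.
  - now transitivity (rev v).
  - rewrite !rev_app_distr, (sb_rel_rev Hlr). reflexivity.
Qed.

Lemma Pi_S t : Pi (S t) = Pi t ++ [Sig (S t)].
Proof. unfold Pi. now rewrite seq_S, map_app. Qed.

Lemma in_Pi t a : In a (Pi t) -> exists j, a = Sig j /\ 1 <= j <= t.
Proof.
  unfold Pi. intros [k [<- Hk]]%in_map_iff. apply in_seq in Hk.
  exists (S k). split; [reflexivity | lia].
Qed.

Lemma in_Delta_aux t a : In a (Delta_aux t) -> exists j, a = Sig j /\ 1 <= j <= t.
Proof.
  induction t as [|t IH]; cbn [Delta_aux]; [contradiction|].
  intros [Ha | Ha]%in_app_or.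
  - exact (in_Pi Ha).
  - destruct (IH Ha) as [j [-> Hj]]. exists j. split; [reflexivity | lia].
Qed.

Section Garside.
Variable n : nat.

Lemma Delta_aux_S_rev t : S t <= n - 1 ->
  sb_eq n (Delta_aux (S t)) (Delta_aux t ++ rev (Pi (S t))).
Proof.
  induction t as [|t IH]; intros Ht; [reflexivity|].
  change (sb_eq n (Pi (S (S t)) ++ Delta_aux (S t))
                  ((Pi (S t) ++ Delta_aux t) ++ rev (Pi (S (S t))))).
  rewrite IH by lia. rewrite (Pi_S (S t)), rev_app_distr. simpl (rev [_]).
  rewrite <- !app_assoc. f_equiv. rewrite !app_assoc. f_equiv.
  apply sb_eq_commute_word. intros b [j [-> Hj]]%in_Delta_aux.
  apply sb_eq_of_rel, r_ss; unfold gen_ok; lia.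
Qed.

Section Generator.
Variable g : nat -> letter.
Hypothesis g_Sig_or_X : g = Sig \/ g = X.

Lemma gen_Sig_comm_far i j : gen_ok n i -> gen_ok n j -> i - j > 1 \/ j - i > 1 ->
  sb_eq n [g i; Sig j] [Sig j; g i].
Proof.
  intros Hi Hj Hij. destruct g_Sig_or_X as [-> | ->];
    apply sb_eq_of_rel; constructor; auto; lia.
Qed.

Lemma gen_Sig_comm_same i : gen_ok n i -> sb_eq n [g i; Sig i] [Sig i; g i].
Proof.
  intros Hi. destruct g_Sig_or_X as [-> | ->]; [reflexivity|].
  apply sb_eq_of_rel; constructor; auto; lia.
Qed.

Lemma gen_braid i : gen_ok n i -> gen_ok n (S i) ->
  sb_eq n [g (S i); Sig i; Sig (S i)] [Sig i; Sig (S i); g i].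
Proof.
  intros Hi HSi. symmetry.
  destruct g_Sig_or_X as [-> | ->]; apply sb_eq_of_rel; constructor; auto.
Qed.

Lemma gen_Pi i t : 1 <= i < t -> t <= n - 1 ->
  sb_eq n ([g (S i)] ++ Pi t) (Pi t ++ [g i]).
Proof.
  induction t as [|t IH]; intros Hit Ht; [lia|].
  rewrite Pi_S. destruct (Nat.eq_dec i t) as [<- | Hne].
  - destruct i as [|k]; [lia|]. rewrite Pi_S, <- !app_assoc, app_assoc.
    rewrite sb_eq_commute_word.
    + rewrite <- app_assoc. f_equiv. apply gen_braid; unfold gen_ok; lia.
    + intros b [j [-> Hj]]%in_Pi. apply gen_Sig_comm_far; unfold gen_ok; lia.
  - rewrite app_assoc, IH by lia. rewrite <- !app_assoc. f_equiv.
    apply gen_Sig_comm_far; unfold gen_ok; lia.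
Qed.

Lemma gen_rev_Pi i t : 1 <= i < t -> t <= n - 1 ->
  sb_eq n ([g i] ++ rev (Pi t)) (rev (Pi t) ++ [g (S i)]).
Proof.
  intros Hit Ht. pose proof (sb_eq_rev (gen_Pi Hit Ht)) as H.
  rewrite !rev_app_distr in H. now symmetry.
Qed.

Lemma gen_Delta_aux_conj t i : t <= n - 1 -> 1 <= i <= t ->
  sb_eq n ([g i] ++ Delta_aux t) (Delta_aux t ++ [g (S t - i)]).
Proof.
  induction t as [|t IH] in i |- *; intros Ht Hi; [lia|].
  destruct (Nat.eq_dec i (S t)) as [-> | Hne].
  - destruct t as [|t].
    + apply gen_Sig_comm_same. unfold gen_ok. lia.
    + change (Delta_aux (S (S t))) with (Pi (S (S t)) ++ Delta_aux (S t)).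
      rewrite app_assoc, gen_Pi by lia. rewrite <- app_assoc, IH by lia.
      now rewrite app_assoc, (Nat.sub_succ (S (S t))).
  - rewrite Delta_aux_S_rev by lia.
    rewrite app_assoc, IH by lia. rewrite <- app_assoc, gen_rev_Pi by lia.
    now rewrite app_assoc, <- Nat.sub_succ_l by lia.
Qed.

End Generator.
End Garside.

Theorem proposition2p3 (n : nat) (hn : 2 <= n) (i : nat) (hi1 : 1 <= i) (hi2 : i <= n - 1) :
  sb_eq n ([Sig i] ++ Delta n) (Delta n ++ [Rlet n (Sig i)]) /\
  sb_eq n ([X i] ++ Delta n) (Delta n ++ [Rlet n (X i)]).
Proof.
  unfold Delta, Rlet. replace (n - i) with (S (n - 1) - i) by lia.
  split; apply gen_Delta_aux_conj; auto; lia.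
Qed.
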